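(* Let $\Psi$ be a universal resource. Then $E_s(\Psi)=\infty$.
   Context: For an $N$-qubit $|\psi\rangle$ and an $n$-qubit $|\phi\rangle$, $n\le N$, write $|\psi\rangle\geq_{\mathrm{LOCC}}|\phi\rangle$ if for some set $A$ of $n$ qubits the transformation $|\psi\rangle\to|\phi\rangle^A|0\rangle^{\bar A}$ is achievable exactly and with probability one by LOCC (each qubit a separate party). A resource is an infinite family $\Psi$ of multi-qubit pure states; it is universal if for every $n$ and every $n$-qubit $|\phi\rangle$ some $|\psi\rangle\in\Psi$ has $|\psi\rangle\geq_{\mathrm{LOCC}}|\phi\rangle$. The Schmidt measure $E_s(|\psi\rangle)$ of an $N$-qubit state is $\log_2K$, where $K$ is the minimal number of $N$-qubit product states $|\alpha_1\rangle,\dots,|\alpha_K\rangle$ such that $|\psi\rangle=\sum_{i=1}^Ka_i|\alpha_i\rangle$ for some complex $a_i$; $E_s(\Psi):=\sup_{|\psi\rangle\in\Psi}E_s(|\psi\rangle)$. *)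

From HB Require Import structures.
From mathcomp Require Import all_boot all_order all_algebra.
From mathcomp Require Import all_classical all_reals all_analysis.
From mathcomp.real_closed Require Import complex.

Set Implicit Arguments.
Unset Strict Implicit.
Unset Printing Implicit Defensive.

Import Order.TTheory GRing.Theory Num.Theory.
Local Open Scope ring_scope.
Local Open Scope classical_set_scope.

Section QubitDefs.
Variable R : realType.
Local Notation C := (R[i]).

Definition bits (N : nat) := {ffun 'I_N -> 'I_2}.

(* A (not necessarily normalised) vector of (C^2)^{\otimes N}, given by its
   coordinates in the computational basis. *)
Definition qvec (N : nat) := bits N -> C.

Definition is_pure (N : nat) (psi : qvec N) : Prop :=
  \sum_(x : bits N) psi x * (psi x)^* = 1.

Definition apply_local (N : nat) (k : 'I_N) (M : 'M[C]_2) (psi : qvec N)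
  : qvec N :=
  fun x => \sum_(b : 'I_2) M (x k) b * psi (finfun (fun j => if j == k then b else x j)).

Definition kraus_family (m : nat) (M : 'I_m -> 'M[C]_2) : Prop :=
  forall a b : 'I_2,
    \sum_(j < m) \sum_(c : 'I_2) ((M j c a)^* * M j c b) = (a == b)%:R.

Definition proportional (N : nat) (psi phi : qvec N) : Prop :=
  exists c : C, c != 0 /\ forall x, psi x = c * phi x.

(* Exact, probability-one LOCC transformation psi -> phi among the N
   qubits, each qubit being a separate party: a finite-round protocol in
   which, at each round, one party performs a local measurement (finitely
   many Kraus operators, chosen depending on all previous outcomes), and
   every outcome of nonzero probability must eventually lead to phi. *)
Inductive locc (N : nat) : qvec N -> qvec N -> Prop :=
| locc_done psi phi : proportional psi phi -> locc psi phi
| locc_meas psi phi (k : 'I_N) (m : nat) (M : 'I_m -> 'M[C]_2) :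
    kraus_family M ->
    (forall j : 'I_m, apply_local k (M j) psi <> (fun _ => 0) ->
       locc (apply_local k (M j) psi) phi) ->
    locc psi phi.

(* |phi>^A |0>^{complement of A}, A being the image of the injection f. *)
Definition embed (n N : nat) (f : 'I_n -> 'I_N) (phi : qvec n) : qvec N :=
  fun x => if [forall k, (k \notin codom f) ==> (x k == ord0)]
           then phi (finfun (fun i => x (f i))) else 0.

Definition locc_geq (N n : nat) (psi : qvec N) (phi : qvec n) : Prop :=
  (n <= N)%N /\
  exists f : 'I_n -> 'I_N, injective f /\ locc psi (embed f phi).

Definition mqstate := {N : nat & qvec N}.

Definition is_resource (Psi : set mqstate) : Prop :=
  infinite_set Psi /\ forall s, Psi s -> is_pure (projT2 s).

Definition universal (Psi : set mqstate) : Prop :=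
  forall (n : nat) (phi : qvec n), is_pure phi ->
    exists s, Psi s /\ locc_geq (projT2 s) phi.

Definition sum_of_products (N : nat) (psi : qvec N) (K : nat) : Prop :=
  exists (a : 'I_K -> C) (v : 'I_K -> 'I_N -> 'I_2 -> C),
    forall x : bits N, psi x = \sum_(i < K) a i * \prod_(k < N) v i k (x k).

Definition log2 (x : R) : R := ln x / ln 2.

Definition schmidt_measure (N : nat) (psi : qvec N) : R :=
  inf [set log2 K%:R | K in sum_of_products psi].

(* E_s(Psi) = +oo, i.e. sup_{psi in Psi} E_s(psi) is unbounded. *)
Definition schmidt_measure_infinite (Psi : set mqstate) : Prop :=
  forall r : R, exists s, Psi s /\ r < schmidt_measure (projT2 s).

End QubitDefs.

From mathcomp Require Import all_boot all_order all_algebra.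
From mathcomp Require Import all_classical all_reals all_analysis.
From mathcomp.real_closed Require Import complex.

Set Implicit Arguments.
Unset Strict Implicit.
Unset Printing Implicit Defensive.

Import Order.TTheory GRing.Theory Num.Theory.
Local Open Scope ring_scope.

(* The Schmidt rank (the least number of product terms) cannot grow under
   exact LOCC: a local operator maps a product state to a product state, and
   completeness of a Kraus family guarantees that some outcome of a nonzero
   state is nonzero, so following nonzero branches carries a decomposition of
   the initial state to the target; restricting to the qubits of A, the
   others being |0>, does not increase it either.  The state of m Bell pairs
   has Schmidt rank at least 2^m: its flattening across the pairs is a
   nonzero multiple of the identity, while each product term contributes a
   matrix of rank at most one.  A universal resource reaches every such
   state, hence has Schmidt measure at least m for every m. *)

Section SchmidtRank.
Variable R : realType.
Local Notation C := (R[i]).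

Definition set_bit N (x : bits N) (k : 'I_N) (b : 'I_2) : bits N :=
  [ffun j => if j == k then b else x j].

Lemma set_bit_eq N (x : bits N) k b : set_bit x k b k = b.
Proof. by rewrite ffunE eqxx. Qed.

Lemma set_bit_id N (x : bits N) k : set_bit x k (x k) = x.
Proof. by apply/ffunP => j; rewrite ffunE; case: eqP => // ->. Qed.

Lemma set_bitI N (x : bits N) k b c : set_bit (set_bit x k c) k b = set_bit x k b.
Proof. by apply/ffunP => j; rewrite !ffunE; case: eqP. Qed.

Lemma apply_localE N (k : 'I_N) (M : 'M[C]_2) (psi : qvec R N) x :
  apply_local k M psi x = \sum_(b : 'I_2) M (x k) b * psi (set_bit x k b).
Proof. by []. Qed.

Lemma kraus_resolution N (k : 'I_N) m (M : 'I_m -> 'M[C]_2) (psi : qvec R N) x :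
  kraus_family M ->
  psi x = \sum_(j < m) \sum_(c : 'I_2)
            (M j c (x k))^* * apply_local k (M j) psi (set_bit x k c).
Proof.
move=> MK.
transitivity (\sum_(b : 'I_2) (x k == b)%:R * psi (set_bit x k b)).
  rewrite (bigD1 (x k)) //= eqxx mul1r set_bit_id big1 ?addr0 // => b.
  by rewrite eq_sym => /negbTE ->; rewrite mul0r.
under eq_bigr do rewrite -MK big_distrl /=.
rewrite exchange_big; apply: eq_bigr => j _.
under eq_bigr do rewrite big_distrl /=.
rewrite exchange_big; apply: eq_bigr => c _.
rewrite apply_localE set_bit_eq big_distrr; apply: eq_bigr => b _ /=.
by rewrite set_bitI mulrA.
Qed.

Lemma kraus_branch_neq0 N (k : 'I_N) m (M : 'I_m -> 'M[C]_2) (psi : qvec R N) :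
  kraus_family M -> psi <> (fun _ => 0) ->
  exists j, apply_local k (M j) psi <> (fun _ => 0).
Proof.
move=> MK psi_neq0; apply/not_existsP => branches0; apply: psi_neq0.
apply/funext => x; rewrite (kraus_resolution k psi x MK) big1 // => j _.
have /notP -> := branches0 j.
by rewrite big1 // => c _; rewrite mulr0.
Qed.

Lemma sum_of_products_scale N (psi : qvec R N) c K :
  sum_of_products psi K -> sum_of_products (fun x => c * psi x) K.
Proof.
case=> a [v psiE]; exists (fun i => c * a i), v => x.
by rewrite psiE big_distrr; apply: eq_bigr => i _ /=; rewrite mulrA.
Qed.

Lemma sum_of_products_apply_local N (k : 'I_N) (M : 'M[C]_2) (psi : qvec R N) K :
  sum_of_products psi K -> sum_of_products (apply_local k M psi) K.
Proof.
case=> a [v psiE].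
pose w i l c := if l == k then \sum_(b : 'I_2) M c b * v i k b else v i l c.
exists a, w => x; rewrite apply_localE.
under eq_bigr do rewrite psiE big_distrr /=.
rewrite exchange_big; apply: eq_bigr => i _ /=.
rewrite [in RHS](bigD1 k) //= /w eqxx big_distrl big_distrr /=.
rewrite [X in _ = \sum__ _ * (_ * X)](eq_bigr (fun l => v i l (x l))); last first.
  by move=> l /negbTE ->.
apply: eq_bigr => b _; rewrite (bigD1 k) //= set_bit_eq.
rewrite (eq_bigr (fun l => v i l (x l))); last first.
  by move=> l /negbTE kl; rewrite ffunE kl.
by rewrite mulrCA !mulrA.
Qed.

Lemma locc_sum_of_products N (psi phi : qvec R N) K :
  locc psi phi -> psi <> (fun _ => 0) ->
  sum_of_products psi K -> sum_of_products phi K.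
Proof.
elim=> {psi phi} [psi phi [c [c_neq0 psiE]] _|psi phi k m M MK _ IH psi_neq0] sop_psi.
  have -> : phi = (fun x => c^-1 * psi x).
    by apply/funext => x; rewrite psiE mulrA mulVf // mul1r.
  exact: sum_of_products_scale.
have [j branch_neq0] := kraus_branch_neq0 k MK psi_neq0.
exact/(IH j branch_neq0 branch_neq0)/sum_of_products_apply_local.
Qed.

Section Embedding.
Variables (n N : nat) (f : 'I_n -> 'I_N).
Hypothesis f_inj : injective f.

Definition extend_bits (y : bits n) : bits N :=
  [ffun k => if [pick j | f j == k] is Some j then y j else ord0].

Lemma extend_bits_out y k : k \notin codom f -> extend_bits y k = ord0.
Proof.
move=> k_out; rewrite ffunE; case: pickP => // j /eqP fj.
by rewrite -fj codom_f in k_out.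
Qed.

Lemma extend_bits_f y j : extend_bits y (f j) = y j.
Proof.
rewrite ffunE; case: pickP => [j' /eqP /f_inj -> //|/(_ j)].
by rewrite eqxx.
Qed.

Lemma embed_extend_bits (phi : qvec R n) y : embed f phi (extend_bits y) = phi y.
Proof.
rewrite /embed; have -> : [forall k, (k \notin codom f) ==> (extend_bits y k == ord0)].
  by apply/forallP => k; apply/implyP => k_out; rewrite extend_bits_out.
by congr phi; apply/ffunP => j; rewrite ffunE extend_bits_f.
Qed.

Lemma sum_of_products_embed (phi : qvec R n) K :
  sum_of_products (embed f phi) K -> sum_of_products phi K.
Proof.
case=> a [v embedE].
exists (fun i => a i * \prod_(k < N | k \notin codom f) v i k ord0),
  (fun i j b => v i (f j) b) => y.
rewrite -embed_extend_bits embedE; apply: eq_bigr => i _.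
rewrite (bigID (mem (codom f))) /= mulrAC -mulrA; congr (_ * (_ * _)).
  rewrite (eq_bigl (mem [set f j | j in 'I_n])); last first.
    by move=> k; apply/codomP/imsetP => [[j ->]|[j _ ->]]; exists j.
  rewrite big_imset /=; last by move=> ? ? _ _ /f_inj.
  by apply: eq_bigr => j _; rewrite extend_bits_f.
by apply: eq_bigr => k k_out; rewrite extend_bits_out.
Qed.

End Embedding.

Lemma locc_geq_sum_of_products N n (psi : qvec R N) (phi : qvec R n) K :
  locc_geq psi phi -> psi <> (fun _ => 0) ->
  sum_of_products psi K -> sum_of_products phi K.
Proof.
move=> [_ [f [f_inj psi_phi]]] psi_neq0 sop_psi.
exact/(sum_of_products_embed f_inj)/(locc_sum_of_products psi_phi psi_neq0).
Qed.

Lemma pure_neq0 N (psi : qvec R N) : is_pure psi -> psi <> (fun _ => 0).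
Proof.
move=> + psi0; rewrite /is_pure psi0 big1 => [/eqP|x _]; last by rewrite mul0r.
by rewrite eq_sym oner_eq0.
Qed.

Definition bits_cat m n (y : bits m) (z : bits n) : bits (m + n) :=
  [ffun k => match fintype.split k with inl i => y i | inr i => z i end].

Lemma bits_cat_lshift m n (y : bits m) (z : bits n) i : bits_cat y z (lshift n i) = y i.
Proof. by rewrite ffunE (unsplitK (inl _ i)). Qed.

Lemma bits_cat_rshift m n (y : bits m) (z : bits n) i : bits_cat y z (rshift m i) = z i.
Proof. by rewrite ffunE (unsplitK (inr _ i)). Qed.

Definition flattening m n (psi : qvec R (m + n)) : 'M[C]_(#|bits m|, #|bits n|) :=
  \matrix_(i, j) psi (bits_cat (enum_val i) (enum_val j)).

Lemma rank_flattening_le m n (psi : qvec R (m + n)) K :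
  sum_of_products psi K -> (\rank (flattening psi) <= K)%N.
Proof.
case=> a [v psiE].
pose P : 'M[C]_(#|bits m|, K) := \matrix_(i, l)
  (a l * \prod_(b < m) v l (lshift n b) ((enum_val i : bits m) b)).
pose Q : 'M[C]_(K, #|bits n|) := \matrix_(l, j)
  \prod_(b < n) v l (rshift m b) ((enum_val j : bits n) b).
suff -> : flattening psi = P *m Q by apply: mulmx_max_rank.
apply/matrixP => i j; rewrite !mxE psiE; apply: eq_bigr => l _.
rewrite !mxE big_split_ord /= -mulrA; congr (_ * (_ * _)).
  by apply: eq_bigr => b _; rewrite bits_cat_lshift.
by apply: eq_bigr => b _; rewrite bits_cat_rshift.
Qed.

(* m Bell pairs, qubit a being paired with qubit m + a. *)
Definition bell_support m : {set bits (m + m)} :=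
  [set x : bits (m + m) | [forall a : 'I_m, x (lshift m a) == x (rshift m a)]].

Definition bell_amplitude m : C := sqrtC (#|bell_support m|%:R)^-1.

Definition bell m : qvec R (m + m) :=
  fun x => if x \in bell_support m then bell_amplitude m else 0.
Arguments bell m : clear implicits.

Lemma bell_support_card_gt0 m : (0 < #|bell_support m|)%N.
Proof.
apply/card_gt0P; exists [ffun => ord0].
by rewrite inE; apply/forallP => a; rewrite !ffunE.
Qed.

Lemma bell_amplitude_neq0 m : bell_amplitude m != 0.
Proof. by rewrite sqrtC_eq0 invr_eq0 pnatr_eq0 -lt0n bell_support_card_gt0. Qed.

Lemma bell_pure m : is_pure (bell m).
Proof.
rewrite /is_pure (bigID (mem (bell_support m))) /= [X in _ + X]big1 ?addr0; last first.
  by move=> x /negbTE x_out; rewrite /bell x_out mul0r.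
under eq_bigr => x x_in do rewrite /bell x_in.
rewrite sumr_const geC0_conj ?sqrtC_ge0 ?invr_ge0 ?ler0n //.
rewrite -expr2 sqrtCK -[LHS]mulr_natr mulVf // pnatr_eq0 -lt0n.
exact: bell_support_card_gt0.
Qed.

Lemma flattening_bell m : flattening (bell m) = bell_amplitude m *: 1%:M.
Proof.
apply/matrixP => i j; rewrite !mxE /bell inE.
under eq_forallb => a do rewrite bits_cat_lshift bits_cat_rshift.
case: eqP => [<-|ij]; first by rewrite mulr1n mulr1 (introT forallP).
rewrite mulr0n mulr0 ifF //; apply/negP => /forallP ij_eq; apply: ij.
by apply/enum_val_inj/ffunP => a; apply/eqP.
Qed.

Lemma bell_schmidt_rank m K : sum_of_products (bell m) K -> (2 ^ m <= K)%N.
Proof.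
move=> /rank_flattening_le; rewrite flattening_bell.
by rewrite mxrank_scale_nz ?bell_amplitude_neq0 // mxrank1 card_ffun !card_ord.
Qed.

Lemma sum_of_products_card_bits N (psi : qvec R N) : sum_of_products psi #|bits N|.
Proof.
exists (fun i => psi (enum_val i)),
  (fun i k b => ((enum_val i : bits N) k == b)%:R) => x.
rewrite (bigD1 (enum_rank x)) //= enum_rankK big1 ?mulr1 => [|k _]; last first.
  by rewrite eqxx.
rewrite big1 ?addr0 // => i i_neq.
have i_x : enum_val i != x by apply: contraNneq i_neq => <-; rewrite enum_valK.
have [k xik] : exists k, enum_val i k != x k.
  apply/existsP; rewrite -negb_forall; apply: contra i_x => /forallP eq_ix.
  by apply/eqP/ffunP => k; apply/eqP.
by rewrite (bigD1 k) //= (negbTE xik) mul0r mulr0.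
Qed.

Lemma schmidt_measure_ge N (psi : qvec R N) r :
  (forall K, sum_of_products psi K -> (2 ^ r <= K)%N) -> r%:R <= schmidt_measure psi.
Proof.
move=> rank_ge; apply: lb_le_inf.
  by exists (log2 #|bits N|%:R), #|bits N| => //; apply: sum_of_products_card_bits.
move=> _ [K /rank_ge rK <-].
have ln2_gt0 : (0 : R) < ln 2 by rewrite ln_gt0 // ltr1n.
have K_gt0 : (0 < K)%N by apply: leq_trans rK; rewrite expn_gt0.
rewrite /log2 ler_pdivlMr // mulr_natl -lnXn ?ltr0n //.
by rewrite ler_ln ?posrE ?exprn_gt0 ?ltr0n // -natrX ler_nat.
Qed.

End SchmidtRank.

Theorem theorem8 (R : realType) (Psi : set (mqstate R)) :
  is_resource Psi -> universal Psi -> schmidt_measure_infinite Psi.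
Proof.
move=> [_ Psi_pure] Psi_univ r.
pose m := (Num.truncn `|r|).+1.
have r_lt_m : r < m%:R by apply: le_lt_trans (ler_norm r) (truncnS_gt _).
have [[N psi] [Psi_psi psi_geq_bell]] := Psi_univ _ _ (bell_pure R m).
exists (existT _ N psi); split => //; apply: lt_le_trans r_lt_m _.
apply: schmidt_measure_ge => K sop_psi; apply: bell_schmidt_rank.
exact: locc_geq_sum_of_products psi_geq_bell (pure_neq0 (Psi_pure _ Psi_psi)) sop_psi.
Qed.
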